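(* Let $\mathcal{G}=\langle G_1,\dots,G_L\rangle$ be a non-strict temporal graph with vertex set $V$, $|V|=n$, in which every layer consists of exactly two components and no two consecutive layers have the same partition. If there are $1+\log_2 n$ consecutive free transitions (i.e., the transitions from step $j$ to step $j+1$ are free for all $j\in\{t,t+1,\dots,t+m-1\}$ with $m\ge 1+\log_2 n$ and $t+m\le L$), then for every $s\in V$ there is a non-strict exploration schedule starting at $s$.
   Context: A non-strict temporal graph $\mathcal{G}=\langle G_1,\dots,G_L\rangle$ with vertex set $V$ is a sequence of partitions $G_t$ of $V$ into components. A non-strict temporal walk starting at $v$ at time $t_1$ is a sequence of components $C_{t_1},\dots,C_{t_l}$ with $t_{j+1}=t_j+1$, $C_{t_j}\in G_{t_j}$, $C_{t_j}\cap C_{t_{j+1}}\neq\emptyset$, $v\in C_{t_1}$, $t_l\le L$; it visits $\bigcup_j C_{t_j}$. A non-strict exploration schedule starting at $s$ is such a walk starting at $s$ at time $1$ that visits all of $V$. For $G_i=\{A_i,B_i\}$, $G_{i+1}=\{A_{i+1},B_{i+1}\}$, the transition from step $i$ to $i+1$ is free if $A_i\cap A_{i+1}$, $A_i\cap B_{i+1}$, $B_i\cap A_{i+1}$, $B_i\cap B_{i+1}$ are all non-empty. *)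

From mathcomp Require Import all_boot.
Set Implicit Arguments. Unset Strict Implicit. Unset Printing Implicit Defensive.

(* A non-strict temporal graph on a finite vertex type V with lifetime L:
   G t is a partition of V (into components) for each time 1 <= t <= L. *)
Definition temporal_graph (V : finType) (G : nat -> {set {set V}}) (L : nat) : Prop :=
  forall t, 1 <= t <= L -> partition (G t) [set: V].

(* The transition from step i to step i+1 is free: every component of G i
   meets every component of G (i+1).  For two-component layers this is
   exactly the four non-empty intersections of the paper. *)
Definition free_transition (V : finType) (G : nat -> {set {set V}}) (i : nat) : Prop :=
  forall C D, C \in G i -> D \in G i.+1 -> C :&: D != set0.

Definition exploration_schedule (V : finType) (G : nat -> {set {set V}}) (L : nat)
    (s : V) : Prop :=
  exists (l : nat) (C : nat -> {set V}),
    [/\ 1 <= l <= L,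
        (forall j, 1 <= j <= l -> C j \in G j),
        (forall j, 1 <= j < l -> C j :&: C j.+1 != set0),
        s \in C 1 &
        (forall v : V, exists2 j, 1 <= j <= l & v \in C j)].

(* Walk arbitrarily up to time t.  From then on keep a set W containing every
   vertex not yet visited.  Across a free transition the walk may enter either
   component of the next layer; entering the one that contains at least half of
   W at least halves W.  After m >= 1 + log2 n such steps 2^m |W| <= n < 2^m,
   so W is empty and every vertex has been visited. *)

From mathcomp Require Import all_boot.
From mathcomp Require Import zify.

Set Implicit Arguments. Unset Strict Implicit. Unset Printing Implicit Defensive.

Section Partitions.
Variables (V : finType) (P : {set {set V}}).
Hypothesis partP : partition P [set: V].

Lemma partition_block_mem (v : V) : exists2 B, B \in P & v \in B.
Proof.
case/and3P: partP => /eqP coverP _ _.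
have vP : v \in cover P by rewrite coverP inE.
by exists (pblock P v); [apply: pblock_mem | rewrite mem_pblock].
Qed.

Lemma partition_block_neq0 (B : {set V}) : B \in P -> B != set0.
Proof. by case/and3P: partP => _ _ P0 BP; apply: contraNneq P0 => <-. Qed.

Lemma partition2_halving (W : {set V}) :
  #|P| = 2 -> exists2 D, D \in P & 2 * #|W :\: D| <= #|W|.
Proof.
move/eqP/cards2P=> [D1 [D2 [_ defP]]].
have mem_D12 v : (v \in D1) || (v \in D2).
  case: (partition_block_mem v) => B; rewrite defP !inE.
  by case/orP => /eqP-> ->; rewrite ?orbT.
wlog leW : D1 D2 defP mem_D12 / #|W :&: D2| <= #|W :&: D1|.
  move=> hwlog; case: (leqP #|W :&: D2| #|W :&: D1|); first exact: hwlog.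
  move/ltnW; apply: hwlog; first by rewrite defP setUC.
  by move=> v; rewrite orbC.
exists D1; first by rewrite defP !inE eqxx.
have subW : W :\: D1 \subset W :&: D2.
  apply/subsetP => v; rewrite !inE => /andP[vD1 ->].
  by have := mem_D12 v; rewrite (negbTE vD1).
have := subset_leq_card subW; have := cardsID D1 W; lia.
Qed.

End Partitions.

Section Walks.
Variables (V : finType) (G : nat -> {set {set V}}) (L : nat) (s : V).

Definition temporal_walk (l : nat) (C : nat -> {set V}) : Prop :=
  [/\ 1 <= l <= L, (forall j, 1 <= j <= l -> C j \in G j),
      (forall j, 1 <= j < l -> C j :&: C j.+1 != set0) & s \in C 1].

Definition visits (l : nat) (C : nat -> {set V}) (v : V) : Prop :=
  exists2 j, 1 <= j <= l & v \in C j.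

Definition rcons_walk (C : nat -> {set V}) (l : nat) (D : {set V}) :=
  fun j => if j == l.+1 then D else C j.

Lemma temporal_walk_rcons l C D :
  temporal_walk l C -> l < L -> D \in G l.+1 -> C l :&: D != set0 ->
  temporal_walk l.+1 (rcons_walk C l D).
Proof.
rewrite /rcons_walk; case=> /andP[l_gt0 _] CG CC s1 lL DG CD; split => //.
- move=> j /andP[j_gt0 jl]; case: eqP => [-> //|/eqP j_neq].
  by apply: CG; lia.
- move=> j /andP[j_gt0 jl]; rewrite (_ : j == l.+1 = false); last by lia.
  case: (ltnP j l) => [j_lt|j_ge]; last by rewrite (_ : j = l) ?eqxx //; lia.
  by rewrite (_ : j.+1 == l.+1 = false); [apply: CC; lia | lia].
- by rewrite (_ : 1 == l.+1 = false) //; lia.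
Qed.

Lemma visits_rcons l C (D : {set V}) v :
  visits l C v \/ v \in D -> visits l.+1 (rcons_walk C l D) v.
Proof.
rewrite /rcons_walk; case=> [[j jl vC]|vD].
  by exists j; [lia | rewrite /= (_ : j == l.+1 = false) //; lia].
by exists l.+1; rewrite //= eqxx.
Qed.

Hypothesis partG : temporal_graph G L.

Lemma exists_temporal_walk l : 1 <= l <= L -> exists C, temporal_walk l C.
Proof.
elim: l => [|l IH] l_range; first lia.
have [l0 | l_gt0] := posnP l.
  subst l; have [B BG sB] := partition_block_mem (partG l_range) s.
  by exists (fun=> B); split=> // [j|j]; [move=> ?; have -> : j = 1 by lia|lia].
have [|C walkC] := IH; first lia.
have CG : C l \in G l by case: walkC => _ CG _ _; apply: CG; lia.
have /set0Pn[x xC] : C l != set0.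
  by apply: partition_block_neq0 CG; apply: partG; lia.
have [D DG xD] := partition_block_mem (partG l_range) x.
exists (rcons_walk C l D); apply: temporal_walk_rcons => //.
by apply/set0Pn; exists x; rewrite inE xC.
Qed.

Hypothesis two_blocks : forall i, 1 <= i <= L -> #|G i| = 2.

Lemma free_transitions_halve_unvisited t k :
  1 <= t -> t + k <= L -> (forall j, t <= j < t + k -> free_transition G j) ->
  exists C (W : {set V}),
    [/\ temporal_walk (t + k) C, (forall v, v \notin W -> visits (t + k) C v)
      & 2 ^ k * #|W| <= #|V|].
Proof.
move=> t_gt0; elim: k => [|k IH] tkL free.
  have [|C walkC] := exists_temporal_walk (l := t); first lia.
  exists C, [set: V]; rewrite addn0 expn0 mul1n cardsT.
  by split=> // v; rewrite inE.
have [||C [W [walkC visitC halfW]]] := IH; [lia | by move=> j ?; apply: free; lia|].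
have partGk : partition (G (t + k).+1) [set: V] by apply: partG; lia.
have [|D DG halfD] := @partition2_halving _ _ partGk W.
  by apply: two_blocks; lia.
have CG : C (t + k) \in G (t + k) by case: walkC => _ CG _ _; apply: CG; lia.
exists (rcons_walk C (t + k) D), (W :\: D); rewrite addnS; split.
- apply: temporal_walk_rcons => //; first lia.
  by apply: free CG DG; lia.
- move=> v; rewrite in_setD negb_and negbK => /orP[vD|vW]; apply: visits_rcons.
    by right.
  by left; apply: visitC.
- by apply: leq_trans halfW; rewrite expnS -mulnA mulnCA leq_mul2l halfD orbT.
Qed.

End Walks.

(* m >= 1 + log2 n (with m >= 1) is written as 1 <= m /\ n <= 2^(m-1). *)
Theorem lemma5 (V : finType) (G : nat -> {set {set V}}) (L t m : nat) :
  temporal_graph G L ->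
  (forall i, 1 <= i <= L -> #|G i| = 2) ->
  (forall i, 1 <= i < L -> G i != G i.+1) ->
  1 <= t -> 1 <= m -> #|V| <= 2 ^ m.-1 -> t + m <= L ->
  (forall j, t <= j < t + m -> free_transition G j) ->
  forall s : V, exploration_schedule G L s.
Proof.
move=> partG two_blocks _ t_gt0 m_gt0 card_V tmL free s.
have [C [W [walkC visitC halfW]]] :=
  free_transitions_halve_unvisited s partG two_blocks t_gt0 tmL free.
have W0 : W = set0.
  apply/eqP; rewrite -cards_eq0; apply/eqP.
  have e : 2 ^ m = 2 * 2 ^ m.-1 by rewrite -expnS prednK.
  have := leq_trans halfW card_V; rewrite e; have := expn_gt0 2 m.-1; nia.
case: walkC => lL CG CC s1.
exists (t + m), C; split=> // v.
by apply: visitC; rewrite W0 inE.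
Qed.
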